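(* Let $H_0,H_1$ be complex Hilbert spaces, $G$ a densely defined closed operator from $H_0$ into $H_1$ and $D$ a densely defined closed operator from $H_1$ into $H_0$ with $-G^*\subset D$. Let $m\in\mathcal L(H_0)$ (not necessarily coercive) and let $a\in\mathcal L(H_1)$ be coercive. Let $\mathring T\in\mathcal L(\mathrm{dom}(\mathring G))$ be defined by $(\mathring Tu,v)_{\mathrm{dom}(\mathring G)}=(aGu,Gv)_{H_1}+(mu,v)_{H_0}$ for all $u,v\in\mathrm{dom}(\mathring G)$, and suppose $\mathrm{ran}(\mathring T)$ is closed in $\mathrm{dom}(\mathring G)$. Then the Dirichlet-to-Neumann graph $\Lambda$ associated with $-DaG+m$ satisfies \[ \mathrm{dom}(\Lambda)=\{u_0\in\mathrm{BD}(G):\big(\Phi(\pi_{\mathrm{BD}(D)}a^*Gv)\big)(u_0)=0\text{ for all }v\in\ker(m^*-Da^*\mathring G)\}, \] where $\Phi\colon\mathrm{BD}(D)\to\mathrm{BD}(G)'$ is given by $(\Phi(q))(u)=(Dq,u)_{H_0}+(q,Gu)_{H_1}$.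
   Context: $\mathring D=-G^*$, $\mathring G=-D^*$. Domains carry graph inner products. $\mathrm{BD}(G)$ (resp. $\mathrm{BD}(D)$) is the orthogonal complement of $\mathrm{dom}(\mathring G)$ in $\mathrm{dom}(G)$ (resp. of $\mathrm{dom}(\mathring D)$ in $\mathrm{dom}(D)$) with induced inner products; $\pi_{\mathrm{BD}(G)},\pi_{\mathrm{BD}(D)}$ the orthogonal projections. $\mathrm{BD}(G)'$ is the space of continuous antilinear functionals on $\mathrm{BD}(G)$. Coercive: $\mathrm{Re}(ax,x)\ge\mu\|x\|^2$ for some $\mu>0$. The Dirichlet-to-Neumann graph is $\Lambda=\{(\pi_{\mathrm{BD}(G)}u,\pi_{\mathrm{BD}(D)}aGu): u\in\mathrm{dom}(G),\ aGu\in\mathrm{dom}(D),\ mu-DaGu=0\}$, $\mathrm{dom}(\Lambda)$ the set of first components. $\ker(m^*-Da^*\mathring G)=\{v\in\mathrm{dom}(\mathring G):a^*\mathring Gv\in\mathrm{dom}(D),\ m^*v=Da^*\mathring Gv\}$. *)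

From HB Require Import structures.
From mathcomp Require Import all_boot all_order all_algebra.
From mathcomp Require Import complex.
From mathcomp Require Import reals.
Set Implicit Arguments. Unset Strict Implicit. Unset Printing Implicit Defensive.
Import Order.TTheory GRing.Theory Num.Theory.
Local Open Scope ring_scope.

Section Hilbert.
Variable R : realType.
Local Notation C := (R[i]).

Definition ip_conv (V : lmodType C) (ip : V -> V -> C) (x : nat -> V) (l : V) :=
  forall e : C, 0 < e -> exists N : nat, forall n, (N <= n)%N ->
    ip (x n - l) (x n - l) < e.

Definition ip_cauchy (V : lmodType C) (ip : V -> V -> C) (x : nat -> V) :=
  forall e : C, 0 < e -> exists N : nat, forall n k, (N <= n)%N -> (N <= k)%N ->
    ip (x n - x k) (x n - x k) < e.

Record hilbert (V : lmodType C) := Hilbert {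
  inner : V -> V -> C;
  inner_linear : forall (c : C) x y z, inner (c *: x + y) z = c * inner x z + inner y z;
  inner_conj : forall x y, inner y x = Num.conj (inner x y);
  inner_ge0 : forall x, 0 <= inner x x;
  inner_eq0 : forall x, inner x x = 0 -> x = 0;
  inner_complete : forall x : nat -> V, ip_cauchy inner x -> exists l, ip_conv inner x l
}.

Variables (H0 H1 : lmodType C) (h0 : hilbert H0) (h1 : hilbert H1).

Definition dd_closed (domA : H0 -> Prop) (A : H0 -> H1) :=
  [/\ domA 0,
      (forall (c : C) x y, domA x -> domA y -> domA (c *: x + y)),
      (forall (c : C) x y, domA x -> domA y -> A (c *: x + y) = c *: A x + A y),
      (forall x (e : C), 0 < e -> exists y, domA y /\ inner h0 (x - y) (x - y) < e)
    & (forall (u : nat -> H0) x y, (forall n, domA (u n)) ->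
         ip_conv (inner h0) u x -> ip_conv (inner h1) (fun n => A (u n)) y ->
         domA x /\ A x = y)].

Definition bounded_op (A : H0 -> H1) :=
  (forall (c : C) x y, A (c *: x + y) = c *: A x + A y) /\
  exists M : C, 0 <= M /\ forall x, inner h1 (A x) (A x) <= M * inner h0 x x.

Definition is_adjoint (A : H0 -> H1) (Astar : H1 -> H0) :=
  forall x y, inner h1 (A x) y = inner h0 x (Astar y).

End Hilbert.

Section DtN.
Variable R : realType.
Local Notation C := (R[i]).
Variables (H0 H1 : lmodType C) (h0 : hilbert H0) (h1 : hilbert H1).
Variables (domG : H0 -> Prop) (G : H0 -> H1) (domD : H1 -> Prop) (D : H1 -> H0).

Definition adjG (y : H1) (z : H0) :=
  forall x, domG x -> inner h1 (G x) y = inner h0 x z.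
(* (u, w) in the graph of Gring := - D^*  *)
Definition Gring (u : H0) (w : H1) :=
  forall y, domD y -> inner h0 (D y) u = inner h1 y (- w).
Definition domGring (u : H0) := exists w, Gring u w.
(* dom(Dring) = dom(- G^* ) *)
Definition domDring (y : H1) := exists z, adjG y z.

Definition negGadj_sub_D := forall y z, adjG y z -> domD y /\ D y = - z.

Definition ipG (u v : H0) := inner h0 u v + inner h1 (G u) (G v).
Definition ipD (p q : H1) := inner h1 p q + inner h0 (D p) (D q).

Definition BDG (u : H0) := domG u /\ forall v, domGring v -> ipG u v = 0.
Definition BDD (p : H1) := domD p /\ forall q, domDring q -> ipD p q = 0.

Definition projBDG (u p : H0) := BDG p /\ forall q, BDG q -> ipG (u - p) q = 0.
Definition projBDD (y p : H1) := BDD p /\ forall q, BDD q -> ipD (y - p) q = 0.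

Variables (m mstar : H0 -> H0) (a astar : H1 -> H1).

Definition coercive_op := exists mu : R, 0 < mu /\
  forall x, mu * complex.Re (inner h1 x x) <= complex.Re (inner h1 (a x) x).

Definition DtN_graph (p : H0) (q : H1) := exists u, [/\ domG u, domD (a (G u)),
  m u - D (a (G u)) = 0, projBDG u p & projBDD (a (G u)) q].
Definition dom_DtN (p : H0) := exists q, DtN_graph p q.

Definition ker_adj (v : H0) := exists w, [/\ Gring v w, domD (astar w) &
  mstar v = D (astar w)].

Definition is_Tring (T : H0 -> H0) := forall u, domGring u ->
  domGring (T u) /\ forall v, domGring v ->
     ipG (T u) v = inner h1 (a (G u)) (G v) + inner h0 (m u) v.

Definition Tring_closed_range (T : H0 -> H0) :=
  forall (x : nat -> H0) y, (forall n, exists u, domGring u /\ x n = T u) ->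
    domGring y -> ip_conv ipG x y -> exists u, domGring u /\ y = T u.

Definition Phi (q : H1) (u : H0) := inner h0 (D q) u + inner h1 q (G u).

End DtN.

(* Green's pairing Phi identifies dom(G̊) and dom(D̊) as the annihilators of
   dom(D) and dom(G); both are closed for the graph norms, so the projections
   onto BD(G) and BD(D) leave residuals in dom(G̊) and dom(D̊), and Phi(q) only
   depends on the boundary part of q.  Write t(u, v) = (aGu, Gv) + (mu, v).
   If u solves mu = DaGu with boundary part u0, then for v in
   ker(m^* - Da^*G̊) the value Phi(pi a^*Gv)(u0) is the conjugate of
   t(u0, v) = t(u, v) - t(u - u0, v) = 0 - 0.
   Conversely, represent t(u0, .) on dom(G̊) by p and project p onto the closed
   range of T̊: the residual s is orthogonal to ran(T̊), hence lies in
   ker(m^* - Da^*G̊), and the hypothesis gives (p, s) = 0, so s = 0 and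
   p = T̊w.  Then u = u0 - w solves the equation weakly, hence strongly as D is
   closed, and its boundary part is u0. *)
From HB Require Import structures.
From mathcomp Require Import all_boot all_order all_algebra.
From mathcomp Require Import complex reals.
From mathcomp Require Import boolp classical_sets.
From mathcomp Require Import lra ring.
Import Order.TTheory GRing.Theory Num.Theory.
Set Implicit Arguments. Unset Strict Implicit. Unset Printing Implicit Defensive.
Local Open Scope ring_scope.
Local Open Scope complex_scope.

Section Scalars.
Variable R : realType.
Local Notation C := R[i].

Lemma conjCE (x : C) : Num.conj x = conjc x.
Proof.
rewrite {1}[x]Crect rmorphD rmorphM /= conjCi.
rewrite !conj_Creal ?Creal_Re ?Creal_Im //.
rewrite -complexRe -complexIm -complexiE.
by case: x => a b /=; simpc.
Qed.

Lemma Re_conjc (x : C) : complex.Re (conjc x) = complex.Re x.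
Proof. by case: x. Qed.

Lemma conjc_realC (t : R) : conjc t%:C = t%:C :> C.
Proof. by rewrite /= oppr0. Qed.

Lemma Re_realM (t : R) (x : C) : complex.Re (t%:C * x) = t * complex.Re x.
Proof. by case: x => ? ? /=; simpc. Qed.

Lemma Re_conji_mul (x : C) : complex.Re (conjc 'i%C * x) = complex.Im x.
Proof. by case: x => ? ? /=; simpc. Qed.

Lemma complex_Re_real (x : C) : complex.Im x = 0 -> x = (complex.Re x)%:C.
Proof. by case: x => ? ? /= ->. Qed.

Lemma complex_eq0 (x : C) : complex.Re x = 0 -> complex.Im x = 0 -> x = 0.
Proof. by case: x => ? ? /= -> ->. Qed.

Lemma gtc0_real (e : C) : 0 < e -> e = (complex.Re e)%:C /\ 0 < complex.Re e.
Proof. by rewrite ltcE /= => /andP[/eqP e_real e_gt0]; split=> //; apply: complex_Re_real. Qed.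

Lemma sqr_le_of_quadratic_ge0 (a b r : R) : 0 <= b ->
  (forall t : R, 0 <= a - 2 * t * r + t ^+ 2 * b) -> r ^+ 2 <= a * b.
Proof.
move=> b_ge0 quad_ge0.
have a_ge0 : 0 <= a by have := quad_ge0 0; rewrite !(mulr0, mul0r, expr0n) /= !subr0 addr0.
have [b_gt0|] := ltP 0 b.
  have := quad_ge0 (r / b); set u := r / b.
  have -> : r = u * b by rewrite /u mulfVK // gt_eqF.
  by move=> h; nra.
rewrite le_eqVlt ltNge b_ge0 orbF => /eqP b0; rewrite b0 mulr0.
have [/eqP -> |r_neq0] := boolP (r == 0); first by rewrite expr0n.
have := quad_ge0 ((a + 1) / (2 * r)).
have -> : 2 * ((a + 1) / (2 * r)) * r = a + 1 by field; rewrite r_neq0.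
by rewrite b0 mulr0 addr0 => h; lra.
Qed.

Lemma eq0_of_sqr_le_small (r K : R) : 0 <= K ->
  (forall e : R, 0 < e -> r ^+ 2 <= K * e) -> r = 0.
Proof.
move=> K_ge0 small; apply/eqP; apply: contraT => r_neq0.
have r2_gt0 : 0 < r ^+ 2 by rewrite lt_def sqr_ge0 sqrf_eq0 r_neq0.
pose e := r ^+ 2 / (2 * (K + 1)).
have e_gt0 : 0 < e by rewrite divr_gt0 // mulr_gt0 //; lra.
have eE : e * (2 * (K + 1)) = r ^+ 2 by rewrite /e mulfVK //; apply: lt0r_neq0; lra.
by have := small e e_gt0; nra.
Qed.

Definition invS (n : nat) : R := n.+1%:R^-1.

Lemma invS_gt0 n : 0 < invS n.
Proof. by rewrite invr_gt0 ltr0n. Qed.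

Lemma ler_invS (m n : nat) : (m <= n)%N -> invS n <= invS m.
Proof. by move=> le_mn; rewrite lef_pV2 ?posrE ?ltr0n // ler_nat. Qed.

Lemma exists_invS_lt (c : R) : 0 < c -> exists n, invS n < c.
Proof.
move=> c_gt0; exists (Num.Def.archi_bound c^-1).
have cV_gt0 : 0 < c^-1 by rewrite invr_gt0.
rewrite /invS -(invrK c) ltf_pV2 ?posrE ?ltr0n ?invr_gt0 //.
by apply: (lt_trans (archi_boundP (ltW cV_gt0))); rewrite invrK ltr_nat.
Qed.

End Scalars.
Arguments invS {R}.

Section Subspace.
Variables (R : realType) (V : lmodType R[i]).

Definition subspace (S : V -> Prop) :=
  S 0 /\ forall (c : R[i]) x y, S x -> S y -> S (c *: x + y).

Lemma subspaceT : subspace (fun _ => True).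
Proof. by []. Qed.

Variables (S : V -> Prop) (hS : subspace S).

Lemma subspace0 : S 0. Proof. exact: hS.1. Qed.

Lemma subspaceD x y : S x -> S y -> S (x + y).
Proof. by move=> Sx Sy; rewrite -[x]scale1r; apply: hS.2. Qed.

Lemma subspaceZ c x : S x -> S (c *: x).
Proof. by move=> Sx; rewrite -[c *: x]addr0; apply: hS.2 => //; exact: subspace0. Qed.

Lemma subspaceN x : S x -> S (- x).
Proof. by move=> Sx; rewrite -scaleN1r; apply: subspaceZ. Qed.

Lemma subspaceB x y : S x -> S y -> S (x - y).
Proof. by move=> Sx Sy; apply: subspaceD => //; apply: subspaceN. Qed.

End Subspace.
Arguments subspaceT {R V}.

Section LinearOn.
Variables (R : realType) (X Y : lmodType R[i]) (S : X -> Prop) (f : X -> Y).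

Definition linear_on :=
  forall (c : R[i]) x y, S x -> S y -> f (c *: x + y) = c *: f x + f y.

Hypotheses (hS : subspace S) (fL : linear_on).

Lemma linear_on0 : f 0 = 0.
Proof.
have S0 := subspace0 hS.
have := fL 1 S0 S0; rewrite !scale1r addr0 => f0D.
by apply: (addrI (f 0)); rewrite addr0 -f0D.
Qed.

Lemma linear_onN x : S x -> f (- x) = - f x.
Proof.
move=> Sx; have S0 := subspace0 hS.
by rewrite -scaleN1r -[_ *: x]addr0 fL // linear_on0 addr0 scaleN1r.
Qed.

Lemma linear_onB x y : S x -> S y -> f (x - y) = f x - f y.
Proof.
move=> Sx Sy; rewrite -[x]scale1r fL ?scale1r ?linear_onN //; exact: subspaceN.
Qed.

End LinearOn.

(** * Hermitian forms on subspaces and the projection theorem *)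

(* Graph inner products only live on operator domains, so a form comes with its
   domain [hdom]. *)
Record hform (R : realType) (V : lmodType R[i]) := HForm {
  hdom : V -> Prop;
  hip : V -> V -> R[i];
  hdom_subspace : subspace hdom;
  hip_linear : forall c x y z, hdom x -> hdom y -> hdom z ->
    hip (c *: x + y) z = c * hip x z + hip y z;
  hipC : forall x y, hdom x -> hdom y -> hip y x = conjc (hip x y);
  hip_ge0 : forall x, hdom x -> 0 <= hip x x }.

Section HForm.
Variables (R : realType) (V : lmodType R[i]) (F : hform V).
Local Notation W := (hdom F).
Local Notation ip := (hip F).
Local Notation WD := (subspaceD (hdom_subspace F)).
Local Notation WZ := (subspaceZ (hdom_subspace F)).
Local Notation WN := (subspaceN (hdom_subspace F)).
Local Notation WB := (subspaceB (hdom_subspace F)).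

Lemma hip0l z : W z -> ip 0 z = 0.
Proof.
move=> Wz; have W0 := subspace0 (hdom_subspace F).
have := hip_linear 1 W0 W0 Wz; rewrite scale1r addr0 mul1r => ip0D.
by apply: (addrI (ip 0 z)); rewrite addr0 -ip0D.
Qed.

Lemma hipDl x y z : W x -> W y -> W z -> ip (x + y) z = ip x z + ip y z.
Proof. by move=> *; rewrite -[x]scale1r hip_linear // mul1r scale1r. Qed.

Lemma hipZl c x z : W x -> W z -> ip (c *: x) z = c * ip x z.
Proof.
move=> Wx Wz; have W0 := subspace0 (hdom_subspace F).
by rewrite -[c *: x]addr0 hip_linear // hip0l // addr0.
Qed.

Lemma hipNl x z : W x -> W z -> ip (- x) z = - ip x z.
Proof. by move=> *; rewrite -scaleN1r hipZl // mulN1r. Qed.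

Lemma hipBl x y z : W x -> W y -> W z -> ip (x - y) z = ip x z - ip y z.
Proof. by move=> Wx Wy Wz; have Wny := WN Wy; rewrite hipDl // hipNl. Qed.

Lemma hipDr x y z : W x -> W y -> W z -> ip z (x + y) = ip z x + ip z y.
Proof. by move=> Wx Wy Wz; rewrite (hipC (WD Wx Wy) Wz) hipDl // rmorphD /= -!hipC. Qed.

Lemma hipZr c x z : W x -> W z -> ip z (c *: x) = conjc c * ip z x.
Proof. by move=> Wx Wz; rewrite (hipC (WZ c Wx) Wz) hipZl // rmorphM /= -hipC. Qed.

Lemma hipNr x z : W x -> W z -> ip z (- x) = - ip z x.
Proof. by move=> *; rewrite -scaleN1r hipZr // rmorphN rmorph1 mulN1r. Qed.

Lemma hipBr x y z : W x -> W y -> W z -> ip z (x - y) = ip z x - ip z y.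
Proof. by move=> Wx Wy Wz; have Wny := WN Wy; rewrite hipDr // hipNr. Qed.

Definition hnorm x := complex.Re (ip x x).

Lemma hipxx x : W x -> ip x x = (hnorm x)%:C.
Proof. by move=> Wx; apply: complex_Re_real; apply: ger0_Im; apply: hip_ge0. Qed.

Lemma hnorm_ge0 x : W x -> 0 <= hnorm x.
Proof. by move=> Wx; have := hip_ge0 Wx; rewrite hipxx // ler0c. Qed.

Lemma hipxx_lt x (e : R[i]) : W x -> 0 < e -> (ip x x < e) = (hnorm x < complex.Re e).
Proof. by move=> Wx /gtc0_real[eE _]; rewrite {1}eE hipxx // ltcR. Qed.

Lemma Re_hipC x y : W x -> W y -> complex.Re (ip y x) = complex.Re (ip x y).
Proof. by move=> *; rewrite hipC // Re_conjc. Qed.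

Lemma hnormD x y : W x -> W y ->
  hnorm (x + y) = hnorm x + hnorm y + 2 * complex.Re (ip x y).
Proof.
move=> Wx Wy; have Wxy := WD Wx Wy; rewrite /hnorm hipDl // !hipDr // !raddfD /= (Re_hipC Wx Wy).
by rewrite /hnorm; lra.
Qed.

Lemma hnormB x y : W x -> W y ->
  hnorm (x - y) = hnorm x + hnorm y - 2 * complex.Re (ip x y).
Proof.
move=> Wx Wy; have Wxy := WB Wx Wy; rewrite /hnorm hipBl // !hipBr // !raddfB /= (Re_hipC Wx Wy).
by rewrite /hnorm; lra.
Qed.

Lemma Re_hipZr_real (t : R) x y : W x -> W y ->
  complex.Re (ip x (t%:C *: y)) = t * complex.Re (ip x y).
Proof. by move=> *; rewrite hipZr // conjc_realC Re_realM. Qed.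

Lemma hnormZ_real (t : R) x : W x -> hnorm (t%:C *: x) = t ^+ 2 * hnorm x.
Proof.
move=> Wx; have Wtx := WZ t%:C Wx.
by rewrite /hnorm hipZl // Re_realM Re_hipZr_real // mulrA -expr2.
Qed.

Lemma hnormN x : W x -> hnorm (- x) = hnorm x.
Proof. by move=> Wx; have Wnx := WN Wx; rewrite /hnorm hipNl // hipNr // opprK. Qed.

Lemma hnorm_parallelogram x y : W x -> W y ->
  hnorm (x + y) + hnorm (x - y) = 2 * hnorm x + 2 * hnorm y.
Proof. by move=> Wx Wy; rewrite hnormD // hnormB //; lra. Qed.

(* Discriminant of the nonnegative quadratic [t |-> hnorm (y - t s) + h - hnorm y]. *)
Lemma Re_hip_sqr_le y s (h : R) : W y -> W s ->
  (forall t : R, hnorm y <= hnorm (y - t%:C *: s) + h) ->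
  complex.Re (ip y s) ^+ 2 <= h * hnorm s.
Proof.
move=> Wy Ws almost_min; apply: sqr_le_of_quadratic_ge0 => [|t].
  exact: hnorm_ge0.
have Wts := WZ t%:C Ws.
have := almost_min t; rewrite hnormB // hnormZ_real // Re_hipZr_real //.
by lra.
Qed.

Lemma hip_Cauchy_Schwarz x y : W x -> W y ->
  complex.Re (ip x y) ^+ 2 <= hnorm x * hnorm y.
Proof.
move=> Wx Wy; apply: Re_hip_sqr_le => // t.
by rewrite lerDr; apply/hnorm_ge0/WB/WZ.
Qed.

Lemma hip_eq0_Re y s : W y -> W s -> complex.Re (ip y s) = 0 ->
  complex.Re (ip y ('i%C *: s)) = 0 -> ip y s = 0.
Proof. by move=> Wy Ws Re0; rewrite hipZr // Re_conji_mul; apply: complex_eq0. Qed.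

Definition complete_in (S : V -> Prop) := forall u : nat -> V,
  (forall n, S (u n)) -> ip_cauchy ip u -> exists2 l, S l & ip_conv ip u l.

Lemma complete_in_ext (S S' : V -> Prop) :
  (forall x, S x <-> S' x) -> complete_in S' -> complete_in S.
Proof.
move=> SS' S'_complete u Su /(S'_complete u (fun n => (SS' _).1 (Su n))) [l S'l ul].
by exists l => //; apply/SS'.
Qed.

Lemma hip_limit_orth (v : nat -> V) a l : W a -> W l -> (forall n, W (v n)) ->
  (forall n, ip (v n) a = 0) -> ip_conv ip v l -> ip l a = 0.
Proof.
move=> Wa Wl Wv v_orth vl.
have Re_limit b : W b -> (forall n, ip (v n) b = 0) -> complex.Re (ip l b) = 0.
  move=> Wb vb_orth; apply: (eq0_of_sqr_le_small (hnorm_ge0 Wb)) => e e_gt0.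
  have eC : (0 : R[i]) < e%:C by rewrite ltcR.
  have [n /(_ n (leqnn n))] := vl e%:C eC.
  have Wvl := WB (Wv n) Wl; have Wlv := WB Wl (Wv n).
  rewrite hipxx_lt // => vn_near.
  have lE : ip l b = ip (l - v n) b by rewrite hipBl // vb_orth subr0.
  rewrite lE mulrC; apply: le_trans (hip_Cauchy_Schwarz Wlv Wb) _.
  by rewrite ler_wpM2r ?hnorm_ge0 // -opprB hnormN // ltW.
have Wia := WZ 'i%C Wa.
apply: hip_eq0_Re => //; apply: Re_limit => // n.
by rewrite hipZr // v_orth mulr0.
Qed.

Definition orth_proj (S : V -> Prop) x p := S p /\ forall s, S s -> ip (x - p) s = 0.
Definition orth_compl (S : V -> Prop) x := W x /\ forall s, S s -> ip x s = 0.

Section Projection.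
Variables (S : V -> Prop) (S_dom : forall x, S x -> W x) (S_subspace : subspace S).
Hypothesis S_complete : complete_in S.

Lemma minimizing_seq_cauchy x (d : R) (u : nat -> V) : W x -> (forall n, S (u n)) ->
  (forall s, S s -> d <= hnorm (x - s)) ->
  (forall n, hnorm (x - u n) < d + invS n) -> ip_cauchy ip u.
Proof.
move=> Wx Su d_le u_min.
have Wu n : W (u n) := S_dom (Su n).
have u_near n k : hnorm (u n - u k) <= 2 * invS n + 2 * invS k.
  pose mid := (2^-1 : R[i]) *: (u k + u n).
  have midS : S mid by apply: (subspaceZ S_subspace); apply: (subspaceD S_subspace).
  have Wa := WB Wx (Wu k); have Wb := WB Wx (Wu n).
  have midD : mid + mid = u k + u n.
    by rewrite /mid -scalerDl -div1r -splitr scale1r.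
  have sumE : (x - u k) + (x - u n) = (x - mid) + (x - mid).
    by rewrite [RHS]addrACA -opprD midD opprD addrACA.
  have diffE : (x - u k) - (x - u n) = u n - u k by rewrite opprB addrC subrKA.
  have Wxm := WB Wx (S_dom midS).
  have := hnorm_parallelogram Wa Wb; rewrite sumE diffE hnormD // -/(hnorm _).
  have := d_le _ midS; have := u_min n; have := u_min k.
  lra.
move=> e e_pos; have [_ e_gt0] := gtc0_real e_pos.
have [M M_small] : exists M : nat, invS M < complex.Re e / 4.
  by apply: exists_invS_lt; rewrite divr_gt0.
exists M => n k Mn Mk; have Wnk := WB (Wu n) (Wu k); rewrite hipxx_lt //.
have := u_near n k; have := ler_invS R Mn; have := ler_invS R Mk.
lra.
Qed.

Lemma orth_of_minimizing_limit x (d : R) (u : nat -> V) p : W x ->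
  (forall n, S (u n)) -> (forall s, S s -> d <= hnorm (x - s)) ->
  (forall n, hnorm (x - u n) < d + invS n) -> S p -> ip_conv ip u p ->
  forall s, S s -> ip (x - p) s = 0.
Proof.
move=> Wx Su d_le u_min Sp up.
have Wu n : W (u n) := S_dom (Su n).
have Wp := S_dom Sp.
suff Re0 s : S s -> complex.Re (ip (x - p) s) = 0.
  move=> s Ss; have Ws := S_dom Ss; have Wxp := WB Wx Wp.
  by apply: hip_eq0_Re; rewrite // Re0 //; apply: (subspaceZ S_subspace).
move=> Ss; have Ws := S_dom Ss.
apply: (eq0_of_sqr_le_small (K := 2 * hnorm s)); first by rewrite mulr_ge0 ?hnorm_ge0.
move=> e e_gt0; have e2_gt0 : 0 < e / 2 by rewrite divr_gt0.
have e2C : (0 : R[i]) < (e / 2)%:C by rewrite ltcR.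
have [N1 up_near] := up _ e2C.
have [N2 N2_small] := exists_invS_lt e2_gt0.
set n := maxn N1 N2; have Wunp := WB (Wu n) Wp; have Wxu := WB Wx (Wu n).
have := up_near n (leq_maxl N1 N2); rewrite hipxx_lt // => up_n.
have := ler_invS R (leq_maxr N1 N2); rewrite -/n => h_small.
have near_min : complex.Re (ip (x - u n) s) ^+ 2 <= invS n * hnorm s.
  apply: Re_hip_sqr_le => // t.
  have := d_le _ (subspaceD S_subspace (subspaceZ S_subspace t%:C Ss) (Su n)).
  have -> : x - (t%:C *: s + u n) = x - u n - t%:C *: s by rewrite opprD addrA addrAC.
  by have := u_min n; lra.
have CS := hip_Cauchy_Schwarz (WB (Wu n) Wp) Ws.
have -> : x - p = (x - u n) + (u n - p) by rewrite addrA subrK.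
rewrite hipDl // raddfD /=.
have Ns_ge0 := hnorm_ge0 Ws.
have n_small : invS n * hnorm s <= e / 2 * hnorm s.
  by rewrite ler_wpM2r //; apply: ltW; apply: le_lt_trans N2_small.
have p_near : hnorm (u n - p) * hnorm s <= e / 2 * hnorm s by rewrite ler_wpM2r // ltW.
set r1 := complex.Re _ in near_min *; set r2 := complex.Re _ in CS *.
have : (r1 + r2) ^+ 2 <= 2 * r1 ^+ 2 + 2 * r2 ^+ 2 by have := sqr_ge0 (r1 - r2); lra.
lra.
Qed.

Theorem projection_theorem x : W x -> exists p, orth_proj S x p.
Proof.
move=> Wx; pose E : set R := fun r => exists2 s, S s & r = hnorm (x - s).
have S0 := subspace0 S_subspace.
have E_inf : has_inf E.
  split; first by exists (hnorm (x - 0)); exists 0.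
  by exists 0 => _ [s Ss ->]; apply: hnorm_ge0; exact: WB Wx (S_dom Ss).
have d_le s : S s -> inf E <= hnorm (x - s) by move=> Ss; apply: (ge_inf E_inf.2); exists s.
have /choice[u u_min] n : exists s, S s /\ hnorm (x - s) < inf E + invS n.
  by have [_ [s Ss ->]] := inf_adherent (invS_gt0 R n) E_inf; exists s.
have Su n := (u_min n).1; have {}u_min n := (u_min n).2.
have [p Sp up] := S_complete Su (minimizing_seq_cauchy Wx Su d_le u_min).
by exists p; split => //; exact: orth_of_minimizing_limit Wx Su d_le u_min Sp up.
Qed.

Lemma orth_proj_compl x q : W x -> S (x - q) -> orth_compl S q ->
  orth_proj (orth_compl S) x q.
Proof.
move=> Wx Sxq [Wq q_orth]; split => // r [Wr r_orth].
by rewrite (hipC Wr (S_dom Sxq)) r_orth // conjc0.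
Qed.

Lemma exists_orth_proj_compl x : W x -> exists q, orth_proj (orth_compl S) x q.
Proof.
move=> Wx; have [p [Sp p_orth]] := projection_theorem Wx.
exists (x - p); apply: orth_proj_compl => //; last by split => //; exact: WB Wx (S_dom Sp).
by rewrite opprB addrC subrK.
Qed.

Hypothesis hip_definite : forall x, W x -> ip x x = 0 -> x = 0.

Lemma orth_proj_compl_residual x q : W x ->
  orth_proj (orth_compl S) x q -> S (x - q).
Proof.
move=> Wx [[Wq q_orth] xq_orth]; have Wxq := WB Wx Wq.
have [p [Sp p_orth]] := projection_theorem Wxq.
have Wp := S_dom Sp; have Wr := WB Wxq Wp.
suff /subr0_eq -> : x - q - p = 0 by [].
apply: hip_definite => //; rewrite (hipBl Wxq Wp Wr).
rewrite xq_orth; last by split => // s Ss; apply: p_orth.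
by rewrite (hipC Wr Wp) p_orth // conjc0 subrr.
Qed.

End Projection.
End HForm.

(** * Hilbert, product and graph inner products; closed operators *)

Section HilbertForm.
Variables (R : realType) (X : lmodType R[i]) (hX : hilbert X).

Definition hilbert_hform : hform X :=
  @HForm R X (fun _ => True) (inner hX) subspaceT
    (fun c x y z _ _ _ => inner_linear hX c x y z)
    (fun x y _ _ => etrans (inner_conj hX x y) (conjCE _))
    (fun x _ => inner_ge0 hX x).

Lemma innerNl x z : inner hX (- x) z = - inner hX x z.
Proof. exact: (@hipNl _ _ hilbert_hform). Qed.

Lemma innerBl x y z : inner hX (x - y) z = inner hX x z - inner hX y z.
Proof. exact: (@hipBl _ _ hilbert_hform). Qed.

Lemma innerDr x y z : inner hX z (x + y) = inner hX z x + inner hX z y.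
Proof. exact: (@hipDr _ _ hilbert_hform). Qed.

Lemma innerZr c x z : inner hX z (c *: x) = conjc c * inner hX z x.
Proof. exact: (@hipZr _ _ hilbert_hform). Qed.

Lemma innerNr x z : inner hX z (- x) = - inner hX z x.
Proof. exact: (@hipNr _ _ hilbert_hform). Qed.

Lemma innerC x y : inner hX y x = conjc (inner hX x y).
Proof. by rewrite (inner_conj hX) conjCE. Qed.

Lemma inner0l z : inner hX 0 z = 0.
Proof. exact: (@hip0l _ _ hilbert_hform z I). Qed.

Lemma inner0r z : inner hX z 0 = 0.
Proof. by rewrite innerC inner0l conjc0. Qed.

End HilbertForm.

Section ProductForm.
Variables (R : realType) (X Y : lmodType R[i]) (hX : hilbert X) (hY : hilbert Y).

Definition pip (x y : X * Y) := inner hX x.1 y.1 + inner hY x.2 y.2.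

Lemma pip_linear c (x y z : X * Y) : pip (c *: x + y) z = c * pip x z + pip y z.
Proof. by rewrite /pip !inner_linear mulrDr addrACA. Qed.

Lemma pipC (x y : X * Y) : pip y x = conjc (pip x y).
Proof. by rewrite /pip innerC [inner hY _ _]innerC rmorphD. Qed.

Lemma pip_ge0 (x : X * Y) : 0 <= pip x x.
Proof. by apply: addr_ge0; apply: inner_ge0. Qed.

Lemma pip_definite (x : X * Y) : pip x x = 0 -> x = 0.
Proof.
case: x => x1 x2 /eqP; rewrite /pip paddr_eq0 ?inner_ge0 //=.
by case/andP => /eqP/inner_eq0 -> /eqP/inner_eq0 ->.
Qed.

Definition prod_hform : hform (X * Y)%type :=
  @HForm R _ (fun _ => True) pip subspaceT
    (fun c x y z _ _ _ => pip_linear c x y z) (fun x y _ _ => pipC x y)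
    (fun x _ => pip_ge0 x).

Lemma pipBl (x y z : X * Y) : pip (x - y) z = pip x z - pip y z.
Proof. exact: (@hipBl _ _ prod_hform x y z I I I). Qed.

End ProductForm.

Section ClosedOperator.
Variables (R : realType) (X Y : lmodType R[i]) (hX : hilbert X) (hY : hilbert Y).
Variables (domA : X -> Prop) (A : X -> Y).
Hypothesis HA : dd_closed hX hY domA A.

Lemma dd_closed_subspace : subspace domA.
Proof. by case: HA => A0 AD *; split. Qed.

Lemma dd_closed_linear : linear_on domA A.
Proof. by case: HA. Qed.

Local Notation AB := (linear_onB dd_closed_subspace dd_closed_linear).

Definition graph_ip (u v : X) := inner hX u v + inner hY (A u) (A v).

Lemma graph_ip_linear c x y z : domA x -> domA y -> domA z ->
  graph_ip (c *: x + y) z = c * graph_ip x z + graph_ip y z.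
Proof. by move=> Ax Ay Az; rewrite /graph_ip dd_closed_linear // !inner_linear mulrDr addrACA. Qed.

Lemma graph_ipC x y : graph_ip y x = conjc (graph_ip x y).
Proof. by rewrite /graph_ip innerC [inner hY _ _]innerC rmorphD. Qed.

Definition graph_hform : hform X :=
  @HForm R X domA graph_ip dd_closed_subspace graph_ip_linear
    (fun x y _ _ => graph_ipC x y)
    (fun x _ => addr_ge0 (inner_ge0 hX x) (inner_ge0 hY (A x))).

Lemma graph_ip_definite x : graph_ip x x = 0 -> x = 0.
Proof.
move/eqP; rewrite /graph_ip paddr_eq0 ?inner_ge0 //.
by case/andP => /eqP/inner_eq0.
Qed.

Lemma graph_complete : complete_in graph_hform domA.
Proof.
move=> u Au u_cauchy.
have cauchyX : ip_cauchy (inner hX) u.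
  move=> e /u_cauchy[M uM]; exists M => n k Mn Mk.
  by apply: le_lt_trans (uM n k Mn Mk); rewrite lerDl inner_ge0.
have cauchyY : ip_cauchy (inner hY) (fun n => A (u n)).
  move=> e /u_cauchy[M uM]; exists M => n k Mn Mk.
  by apply: le_lt_trans (uM n k Mn Mk); rewrite /= /graph_ip AB // lerDr inner_ge0.
have [x ux] := inner_complete cauchyX; have [y Auy] := inner_complete cauchyY.
have [Ax Axy] := (let: And5 _ _ _ _ A_closed := HA in A_closed) u x y Au ux Auy.
exists x => // e e_gt0; have e2_gt0 : 0 < e / 2 by rewrite divr_gt0.
have [M1 uM1] := ux _ e2_gt0; have [M2 uM2] := Auy _ e2_gt0.
exists (maxn M1 M2) => n; rewrite geq_max => /andP[M1n M2n].
rewrite /= /graph_ip (AB (Au n) Ax) Axy [e]splitr.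
by apply: ltrD; [exact: uM1 | exact: uM2].
Qed.

Definition graph_of (S : X -> Prop) (z : X * Y) := S z.1 /\ z.2 = A z.1.

Lemma pip_graph a b : graph_of domA a -> graph_of domA b ->
  pip hX hY (a - b) (a - b) = graph_ip (a.1 - b.1) (a.1 - b.1).
Proof. by case: a b => [a1 a2] [b1 b2] [/= Aa ->] [/= Ab ->]; rewrite /pip /graph_ip /= AB. Qed.

Section GraphOf.
Variables (S : X -> Prop) (S_dom : forall x, S x -> domA x).

Lemma graph_of_subspace : subspace S -> subspace (graph_of S).
Proof.
move=> S_subspace; split.
  split; first exact: subspace0 S_subspace.
  by rewrite (linear_on0 dd_closed_subspace dd_closed_linear).
move=> c [x1 _] [y1 _] [/= Sx ->] [/= Sy ->]; split; first exact: S_subspace.2.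
by rewrite /= dd_closed_linear //; apply: S_dom.
Qed.

Lemma graph_of_complete :
  complete_in graph_hform S -> complete_in (prod_hform hX hY) (graph_of S).
Proof.
move=> S_complete u Su u_cauchy.
have Au n : graph_of domA (u n) by case: (Su n) => /S_dom.
have [l Sl ul] : exists2 l, S l & ip_conv graph_ip (fun n => (u n).1) l.
  apply: S_complete => [n|e /u_cauchy[M uM]]; first exact: (Su n).1.
  by exists M => n k Mn Mk; rewrite /= -pip_graph //; apply: uM.
have Al : graph_of domA (l, A l) by split => //; apply: S_dom.
by exists (l, A l) => // e /ul[M uM]; exists M => n Mn; rewrite /= pip_graph //; apply: uM.
Qed.

End GraphOf.

Lemma graph_annihilator_complete (F : X * Y -> Prop) :
  complete_in graph_hform (fun x => domA x /\ forall f, F f -> pip hX hY (x, A x) f = 0).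
Proof.
move=> u Su /(graph_complete (fun n => (Su n).1))[l Al ul].
exists l => //; split => // f Ff.
apply: (@hip_limit_orth _ _ (prod_hform hX hY) (fun n => (u n, A (u n)))) => //.
  by move=> n; apply: (Su n).2.
move=> e /ul[M uM]; exists M => n Mn.
by rewrite /= pip_graph //; [apply: uM | split; [exact: (Su n).1 |]].
Qed.

(* The residual (r1, r2) of (x, y) after projection onto the closed graph of A
   has (r2, -r1) in the graph of A^*; the hypothesis then makes (x, y), hence
   the residual itself, orthogonal to (r1, r2). *)
Lemma closed_biadjoint x y :
  (forall p z, (forall u, domA u -> inner hY (A u) p = inner hX u z) ->
     inner hX x z = inner hY y p) -> domA x /\ A x = y.
Proof.
move=> biadj.
have graph_subspace := graph_of_subspace (fun _ Ax => Ax) dd_closed_subspace.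
have [[p1 _] [[/= Ap ->] r_orth]] := projection_theorem (F := prod_hform hX hY)
  (fun _ _ => I) graph_subspace (graph_of_complete (fun _ Ax => Ax) graph_complete)
  (x := (x, y)) I.
have r_adj u : domA u -> inner hY (A u) (y - A p1) = inner hX u (p1 - x).
  move=> Au; have := r_orth (u, A u) (conj Au erefl).
  rewrite /pip /= addrC => /eqP; rewrite addr_eq0 => /eqP r2E.
  by rewrite innerC r2E rmorphN /= -innerC -innerNr opprB.
have r0 : pip hX hY ((x, y) - (p1, A p1)) ((x, y) - (p1, A p1)) = 0.
  rewrite pipBl [pip _ _ (p1, _) _]pipC r_orth ?conjc0 ?subr0; last by split.
  by rewrite /pip /= -[x - p1]opprB innerNr (biadj _ _ r_adj) addNr.
by have /subr0_eq [-> ->] := pip_definite r0.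
Qed.

End ClosedOperator.

(** * The Dirichlet-to-Neumann graph *)

Lemma bounded_op_linear (R : realType) (X Y : lmodType R[i]) (hX : hilbert X)
  (hY : hilbert Y) (A : X -> Y) :
  bounded_op hX hY A -> linear_on (fun _ => True) A.
Proof. by case=> AL _ c x y _ _; apply: AL. Qed.

Section DirichletToNeumann.
Variable R : realType.
Variables (H0 H1 : lmodType R[i]) (h0 : hilbert H0) (h1 : hilbert H1)
  (domG : H0 -> Prop) (G : H0 -> H1) (domD : H1 -> Prop) (D : H1 -> H0)
  (m mstar : H0 -> H0) (a astar : H1 -> H1) (T : H0 -> H0).
Hypotheses (HG : dd_closed h0 h1 domG G) (HD : dd_closed h1 h0 domD D)
  (Hsub : negGadj_sub_D h0 h1 domG G domD D)
  (Hm : bounded_op h0 h0 m) (Hms : is_adjoint h0 h0 m mstar)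
  (Ha : bounded_op h1 h1 a) (Has : is_adjoint h1 h1 a astar)
  (HT : is_Tring h0 h1 G domD D m a T)
  (HTc : Tring_closed_range h0 h1 G domD D T).

Local Notation Gring := (Gring h0 h1 domD D).
Local Notation domGring := (domGring h0 h1 domD D).
Local Notation domDring := (domDring h0 h1 domG G).
Local Notation BDG := (BDG h0 h1 domG G domD D).
Local Notation projBDG := (projBDG h0 h1 domG G domD D).
Local Notation projBDD := (projBDD h0 h1 domG G domD D).
Local Notation Phi := (Phi h0 h1 G D).
Local Notation ker_adj := (ker_adj h0 h1 domD D mstar astar).
Local Notation dom_DtN := (dom_DtN h0 h1 domG G domD D m a).
Local Notation FG := (graph_hform HG).
Local Notation FD := (graph_hform HD).
Local Notation domG_subspace := (dd_closed_subspace HG).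
Local Notation GB := (linear_onB domG_subspace (dd_closed_linear HG)).
Local Notation DB := (linear_onB (dd_closed_subspace HD) (dd_closed_linear HD)).
Local Notation mB := (linear_onB subspaceT (bounded_op_linear Hm) I I).
Local Notation aB := (linear_onB subspaceT (bounded_op_linear Ha) I I).

(* Writing ' for adjoints, -G' ⊂ D gives G̊ = -D' ⊂ G'' = G. *)
Lemma Gring_graph u w : Gring u w -> domG u /\ G u = w.
Proof.
move=> Guw; apply: (closed_biadjoint HG) => p z adj.
have [Dp DpE] := Hsub adj.
have /eqP := Guw p Dp; rewrite DpE innerNl innerNr eqr_opp => /eqP zuE.
by rewrite innerC zuE -innerC.
Qed.

Lemma domGring_Gring v : domGring v -> Gring v (G v).
Proof. by case=> w Gvw; have [_ ->] := Gring_graph Gvw. Qed.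

Lemma domGring_of_adj p z :
  (forall y, domD y -> inner h0 (D y) p = inner h1 y z) -> domGring p /\ G p = - z.
Proof.
move=> adj; have Gpz : Gring p (- z) by move=> y Dy; rewrite opprK; apply: adj.
by have [_ ->] := Gring_graph Gpz; split=> //; exists (- z).
Qed.

Lemma domGringP u : domGring u <-> domG u /\ forall y, domD y -> Phi y u = 0.
Proof.
split=> [Vu | [Gu Phi0]].
  have [Gu _] := Gring_graph (domGring_Gring Vu); split=> // y Dy.
  by rewrite /Phi (domGring_Gring Vu) // innerNr addNr.
exists (G u) => y Dy; apply/eqP; rewrite innerNr -addr_eq0; exact/eqP/Phi0.
Qed.

Lemma domDringP q : domDring q <-> domD q /\ forall x, domG x -> Phi q x = 0.
Proof.
split=> [[z adj] | [Dq Phi0]].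
  have [Dq DqE] := Hsub adj; split=> // x Gx.
  by rewrite /Phi DqE innerNl [inner h1 q _]innerC adj // -innerC addNr.
exists (- D q) => x Gx; rewrite innerNr innerC.
by move/eqP: (Phi0 x Gx); rewrite /Phi addrC addr_eq0 => /eqP ->; rewrite rmorphN /= -innerC.
Qed.

Lemma domGring_dom u : domGring u -> domG u.
Proof. by case/domGringP. Qed.

Lemma domDring_dom q : domDring q -> domD q.
Proof. by case/domDringP. Qed.

Lemma domGring_subspace : subspace domGring.
Proof.
split; first by exists 0 => y _; rewrite inner0r oppr0 inner0r.
move=> c u v /domGring_Gring Gu /domGring_Gring Gv; exists (c *: G u + G v) => y Dy.
by rewrite innerDr innerZr Gu // Gv // opprD innerDr -scalerN innerZr.
Qed.

Lemma domDring_subspace : subspace domDring.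
Proof.
split; first by exists 0 => x _; rewrite !inner0r.
move=> c q r [z qz] [z' rz]; exists (c *: z + z') => x Gx.
by rewrite innerDr innerZr qz // rz // innerDr innerZr.
Qed.

Lemma domGring_complete : complete_in FG domGring.
Proof.
apply: (complete_in_ext _
  (graph_annihilator_complete (F := fun f => exists2 y, domD y & f = (D y, y)))).
move=> u; rewrite domGringP; split=> -[Gu u_orth]; split=> //.
  move=> _ [y Dy ->]; apply/eqP; rewrite -conjc_eq0 /pip /= rmorphD /= -!innerC.
  exact/eqP/u_orth.
move=> y Dy; have /u_orth : exists2 y', domD y' & (D y, y) = (D y', y') by exists y.
rewrite /pip /= => uy0.
by apply/eqP; rewrite -conjc_eq0 /Phi rmorphD /= -!innerC uy0.
Qed.

Lemma domDring_complete : complete_in FD domDring.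
Proof.
apply: (complete_in_ext _
  (graph_annihilator_complete (F := fun f => exists2 x, domG x & f = (G x, x)))).
move=> q; rewrite domDringP; split=> -[Dq q_orth]; split=> //.
  by move=> _ [x Gx ->]; rewrite /pip /= addrC; apply: q_orth.
by move=> x Gx; rewrite /Phi addrC; apply: (q_orth (G x, x)); exists x.
Qed.

Lemma projBDD_exists y : domD y -> exists q, projBDD y q.
Proof.
move=> Dy; have [q yq] := exists_orth_proj_compl (F := FD) domDring_dom
  domDring_subspace domDring_complete Dy.
by exists q; exact: yq.
Qed.

Lemma projBDD_residual y q : domD y -> projBDD y q -> domDring (y - q).
Proof.
move=> Dy yq; apply: (orth_proj_compl_residual (F := FD) domDring_dom
  domDring_subspace domDring_complete _ Dy yq).
by move=> x _; apply: graph_ip_definite.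
Qed.

Lemma projBDG_residual u p : domG u -> projBDG u p -> domGring (u - p).
Proof.
move=> Gu up; apply: (orth_proj_compl_residual (F := FG) domGring_dom
  domGring_subspace domGring_complete _ Gu up).
by move=> x _; apply: graph_ip_definite.
Qed.

Lemma projBDG_of_residual u p : domG u -> BDG p -> domGring (u - p) -> projBDG u p.
Proof. by move=> Gu Bp Vup; exact: (orth_proj_compl (F := FG) domGring_dom Gu Vup Bp). Qed.

Lemma Phi_projBDD y q u : domD y -> projBDD y q -> domG u -> Phi q u = Phi y u.
Proof.
move=> Dy yq Gu; have [_ Phi0] := (domDringP _).1 (projBDD_residual Dy yq).
have Dq : domD q := yq.1.1.
have := Phi0 u Gu; rewrite /Phi DB // !innerBl addrACA -opprD => /eqP.
by rewrite subr_eq0 => /eqP.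
Qed.

Definition tform u v := inner h1 (a (G u)) (G v) + inner h0 (m u) v.

Lemma tform_linear c u w v : domG u -> domG w ->
  tform (c *: u + w) v = c * tform u v + tform w v.
Proof.
move=> Gu Gw; rewrite /tform (dd_closed_linear HG) // (bounded_op_linear Ha c I I).
by rewrite (bounded_op_linear Hm c I I) !inner_linear mulrDr addrACA.
Qed.

Lemma tformB u w v : domG u -> domG w -> tform (u - w) v = tform u v - tform w v.
Proof. by move=> Gu Gw; rewrite /tform GB // aB mB !innerBl addrACA opprD. Qed.

Lemma Tring_tform u v : domGring u -> domGring v -> hip FG (T u) v = tform u v.
Proof. by move=> /HT[_ Tu_rep] /Tu_rep. Qed.

Lemma ker_adjE v :
  ker_adj v -> [/\ domGring v, domD (astar (G v)) & D (astar (G v)) = mstar v].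
Proof.
case=> w [Gvw DaGw mvE]; have [_ GvE] := Gring_graph Gvw; subst w.
by split=> //; exists (G v).
Qed.

Lemma Phi_proj_ker_adj v q u : ker_adj v -> projBDD (astar (G v)) q -> domG u ->
  Phi q u = conjc (tform u v).
Proof.
move=> /ker_adjE[_ DaGv DaGvE] vq Gu; rewrite (Phi_projBDD DaGv vq Gu) /Phi DaGvE.
by rewrite /tform [inner h0 _ u]innerC [inner h1 _ (G u)]innerC -Hms -Has -rmorphD addrC.
Qed.

Lemma tform_solution_eq0 u v :
  m u = D (a (G u)) -> domD (a (G u)) -> domGring v -> tform u v = 0.
Proof. by move=> muE DaGu /domGring_Gring Gv; rewrite /tform muE Gv // innerNr addrN. Qed.

Lemma tform_ker_adj_eq0 w v : domGring w -> ker_adj v -> tform w v = 0.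
Proof.
move=> /domGring_Gring Gw /ker_adjE[_ DaGv DaGvE].
rewrite /tform Hms -DaGvE [inner h0 w _]innerC (Gw _ DaGv) -innerC innerNl.
by rewrite -Has addrN.
Qed.

Lemma solution_of_tform u : domG u -> (forall v, domGring v -> tform u v = 0) ->
  domD (a (G u)) /\ D (a (G u)) = m u.
Proof.
move=> Gu u_weak; apply: (closed_biadjoint HD) => p z adj.
have [Vp GpE] := domGring_of_adj adj.
have /eqP := u_weak p Vp; rewrite /tform GpE innerNr addrC subr_eq0.
by move=> /eqP ->.
Qed.

Lemma ker_adj_of_tform s : domGring s -> (forall u, domGring u -> tform u s = 0) ->
  ker_adj s.
Proof.
move=> Vs s_orth.
have [DaGs DaGsE] : domD (astar (G s)) /\ D (astar (G s)) = mstar s.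
  apply: (closed_biadjoint HD) => p z adj; have [Vp GpE] := domGring_of_adj adj.
  have /eqP := s_orth p Vp; rewrite /tform Has Hms GpE innerNl addrC subr_eq0.
  by move=> /eqP zE; rewrite innerC -zE -innerC.
by exists (G s); split=> //; exact: domGring_Gring.
Qed.

Definition ranTring x := exists u, domGring u /\ x = T u.

Lemma domGring_Tring u : domGring u -> domGring (T u).
Proof. by case/HT. Qed.

Lemma ranTring_dom x : ranTring x -> domG x.
Proof. by case=> u [Vu ->]; apply/domGring_dom/domGring_Tring. Qed.

Lemma Tring_linear : linear_on domGring T.
Proof.
move=> c u v Vu Vv.
have [Gu Gv] := (domGring_dom Vu, domGring_dom Vv).
have Vcuv : domGring (c *: u + v) by apply: domGring_subspace.2.
have VTcuv : domGring (c *: T u + T v) by apply: domGring_subspace.2; apply: domGring_Tring.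
set d := T (c *: u + v) - (c *: T u + T v).
have Vd : domGring d by apply: (subspaceB domGring_subspace) => //; apply: domGring_Tring.
suff d_orth z : domGring z -> hip FG d z = 0.
  by apply/eqP; rewrite -subr_eq0 -/d; apply/eqP/graph_ip_definite/d_orth.
move=> Vz; have Gz := domGring_dom Vz.
have GT w : domGring w -> domG (T w) by move/domGring_Tring/domGring_dom.
rewrite (hipBl (F := FG) (GT _ Vcuv) (domGring_dom VTcuv) Gz).
rewrite (@hip_linear _ _ FG c _ _ _ (GT _ Vu) (GT _ Vv) Gz).
by rewrite !Tring_tform // tform_linear // subrr.
Qed.

Lemma ranTring_subspace : subspace ranTring.
Proof.
split.
  exists 0; split; first exact: subspace0 domGring_subspace.
  by rewrite (linear_on0 domGring_subspace Tring_linear).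
move=> c _ _ [u [Vu ->]] [v [Vv ->]]; exists (c *: u + v).
by split; [apply: domGring_subspace.2 | rewrite Tring_linear].
Qed.

Lemma ranTring_complete : complete_in FG ranTring.
Proof.
move=> x Rx x_cauchy.
have Vx n : domGring (x n) by case: (Rx n) => u [Vu ->]; apply: domGring_Tring.
have [l Vl xl] := domGring_complete Vx x_cauchy.
by exists l => //; apply: HTc Rx Vl xl.
Qed.

(* Project (m u0, a (G u0)) onto the graph of G over dom(G̊). *)
Lemma tform_rep_exists u0 : domG u0 ->
  exists2 p, domGring p & forall v, domGring v -> tform u0 v = hip FG p v.
Proof.
move=> Gu0.
have [[p _] [[/= Vp ->] p_orth]] := projection_theorem (F := prod_hform h0 h1)
  (fun _ _ => I) (graph_of_subspace HG domGring_dom domGring_subspace)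
  (graph_of_complete domGring_dom domGring_complete) (x := (m u0, a (G u0))) I.
exists p => // v Vv; have := p_orth (v, G v) (conj Vv erefl).
by rewrite pipBl /pip /= => /eqP; rewrite subr_eq0 /tform addrC => /eqP.
Qed.

Lemma tform_rep_in_ranTring u0 p : domG u0 ->
  (forall v q, ker_adj v -> projBDD (astar (G v)) q -> Phi q u0 = 0) ->
  domGring p -> (forall v, domGring v -> tform u0 v = hip FG p v) -> ranTring p.
Proof.
move=> Gu0 Phi0 Vp p_rep.
have [r [[w [Vw rE]] s_orth]] := projection_theorem (F := FG) ranTring_dom ranTring_subspace
  ranTring_complete (domGring_dom Vp).
subst r; have VTw := domGring_Tring Vw; set s := p - T w in s_orth.
have Vs : domGring s by apply: (subspaceB domGring_subspace).
have Gp := domGring_dom Vp; have GTw := domGring_dom VTw; have Gs := domGring_dom Vs.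
have Ts_orth u : domGring u -> hip FG (T u) s = 0.
  move=> Vu; have GTu := domGring_dom (domGring_Tring Vu).
  by rewrite (@hipC _ _ FG _ _ Gs GTu) s_orth ?conjc0 //; exists u.
have ks : ker_adj s by apply: ker_adj_of_tform => // u Vu; rewrite -Tring_tform ?Ts_orth.
have [_ DaGs _] := ker_adjE ks; have [q sq] := projBDD_exists DaGs.
have ps0 : hip FG p s = 0.
  have := Phi0 s q ks sq; rewrite (Phi_proj_ker_adj ks sq Gu0) p_rep //.
  by move/eqP; rewrite conjc_eq0 => /eqP.
have s0 : s = 0.
  apply: (@graph_ip_definite _ _ _ h0 h1 G); change (hip FG (p - T w) s = 0).
  by rewrite (hipBl (F := FG) Gp GTw Gs) ps0 Ts_orth // subrr.
by exists w; split=> //; apply/eqP; rewrite -subr_eq0 -/s s0.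
Qed.

Lemma dom_DtN_of_tform_rep u0 w : BDG u0 -> domGring w ->
  (forall v, domGring v -> tform u0 v = hip FG (T w) v) -> dom_DtN u0.
Proof.
move=> Bu0 Vw w_rep; have [Gu0 Gw] := (Bu0.1, domGring_dom Vw).
have Gu : domG (u0 - w) by apply: (subspaceB domG_subspace).
have [DaGu DaGuE] : domD (a (G (u0 - w))) /\ D (a (G (u0 - w))) = m (u0 - w).
  by apply: solution_of_tform => // v Vv; rewrite tformB // w_rep // Tring_tform // subrr.
have [q uq] := projBDD_exists DaGu.
exists q, (u0 - w); split=> //; first by rewrite DaGuE subrr.
apply: projBDG_of_residual => //; rewrite addrAC subrr add0r.
exact: (subspaceN domGring_subspace).
Qed.

Lemma dom_DtN_Phi_ker_adj u0 : dom_DtN u0 ->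
  BDG u0 /\ forall v q, ker_adj v -> projBDD (astar (G v)) q -> Phi q u0 = 0.
Proof.
case=> _ [u [Gu DaGu /subr0_eq muE uu0 _]]; split=> [|v q kv vq]; first exact: uu0.1.
have Gu0 : domG u0 := uu0.1.1; have Vr := projBDG_residual Gu uu0.
have u0E : u0 = u - (u - u0) by rewrite opprB addrC subrK.
have [Vv _ _] := ker_adjE kv.
rewrite (Phi_proj_ker_adj kv vq Gu0) u0E (tformB _ Gu (domGring_dom Vr)).
by rewrite tform_solution_eq0 // tform_ker_adj_eq0 // subrr conjc0.
Qed.

End DirichletToNeumann.

Unset Implicit Arguments.
Set Strict Implicit.
Local Close Scope complex_scope.
Theorem corollary5p4 (R : realType) (H0 H1 : lmodType R[i])
  (h0 : hilbert H0) (h1 : hilbert H1)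
  (domG : H0 -> Prop) (G : H0 -> H1) (domD : H1 -> Prop) (D : H1 -> H0)
  (m mstar : H0 -> H0) (a astar : H1 -> H1) (T : H0 -> H0) :
  dd_closed h0 h1 domG G ->
  dd_closed h1 h0 domD D ->
  negGadj_sub_D h0 h1 domG G domD D ->
  bounded_op h0 h0 m -> is_adjoint h0 h0 m mstar ->
  bounded_op h1 h1 a -> is_adjoint h1 h1 a astar ->
  coercive_op h1 a ->
  is_Tring h0 h1 G domD D m a T ->
  Tring_closed_range h0 h1 G domD D T ->
  forall u0 : H0,
    dom_DtN h0 h1 domG G domD D m a u0 <->
    (BDG h0 h1 domG G domD D u0 /\
     forall v q, ker_adj h0 h1 domD D mstar astar v ->
       projBDD h0 h1 domG G domD D (astar (G v)) q ->
       Phi h0 h1 G D q u0 = 0).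
Proof.
move=> HG HD Hsub Hm Hms Ha Has _ HT HTc u0; split; first exact: dom_DtN_Phi_ker_adj.
case=> Bu0 Phi0; have [p Vp p_rep] := tform_rep_exists m a HG Hsub Bu0.1.
have [w [Vw pE]] := tform_rep_in_ranTring HD Hsub Hm Hms Ha Has HT HTc Bu0.1 Phi0 Vp p_rep.
by apply: (dom_DtN_of_tform_rep HD Hsub Hm Ha HT Bu0 Vw); rewrite -pE.
Qed.
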